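(* Let $(m_n)$ be a sequence of positive integers and let $V_n$ and $U_n$ be linear subspaces of $GF(2)^{m_n}$ with $U_n\subseteq V_n$ for every $n$. If the sequence $(U_n)$ has a uniform weight spectrum, then the sequence $(V_n)$ has a uniform weight spectrum.
   Context: The weight ${\rm wt}(x)$ of $x\in GF(2)^m$ is the number of nonzero coordinates; for $W\subseteq GF(2)^m$, $\mathcal{A}_i(W)=\{x\in W:{\rm wt}(x)=i\}$. For a linear subspace $V\subseteq GF(2)^m$ let $\alpha(V)=\max_{i,\,x}\frac{|\mathcal{A}_i(V+x)|}{|V|}$, the maximum over all $i\in\{0,\dots,m\}$ and $x\in GF(2)^m$. A sequence of subspaces $V_n\subseteq GF(2)^{m_n}$ has a uniform weight spectrum if $\alpha(V_n)\to 0$ as $n\to\infty$. *)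

From HB Require Import structures.
From mathcomp Require Import all_boot all_order all_algebra.
Set Implicit Arguments. Unset Strict Implicit. Unset Printing Implicit Defensive.
Import Order.TTheory GRing.Theory Num.Theory.

Notation F2vec m := 'rV['F_2]_m.

Definition wt (m : nat) (x : F2vec m) : nat := #|[set j : 'I_m | x ord0 j != 0%R]|.

Definition Acoset (m : nat) (V : {vspace F2vec m}) (x : F2vec m) (i : nat)
  : {set F2vec m} := [set y : F2vec m | ((y - x)%R \in V) && (wt y == i)].

Definition card_vs (m : nat) (V : {vspace F2vec m}) : nat :=
  #|[set y : F2vec m | y \in V]|.

Definition alpha (m : nat) (V : {vspace F2vec m}) : rat :=
  ((\max_(i < m.+1) \max_(x : F2vec m) #|Acoset V x i|)%N%:R
   / (card_vs V)%:R)%R.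

Definition uniform_weight_spectrum (ms : nat -> nat)
  (V : forall n, {vspace F2vec (ms n)}) : Prop :=
  forall eps : rat, (0 < eps)%R ->
    exists N : nat, forall n : nat, (N <= n)%N -> (alpha (V n) < eps)%R.

From HB Require Import structures.
From mathcomp Require Import all_boot all_order all_algebra.
Import Order.TTheory GRing.Theory Num.Theory.
Set Implicit Arguments. Unset Strict Implicit.

(* For U <= V, every y in the coset V + x lies in exactly |U| of the cosets
   U + x + z with z in V.  Double counting gives
   |A_i(V + x)| |U| <= |V| max_{i,x'} |A_i(U + x')|, i.e. alpha(V) <= alpha(U),
   so alpha(U_n) -> 0 forces alpha(V_n) -> 0. *)

Definition max_weight_class (m : nat) (V : {vspace F2vec m}) : nat :=
  \max_(i < m.+1) \max_(x : F2vec m) #|Acoset V x i|.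

Lemma alphaE (m : nat) (V : {vspace F2vec m}) :
  alpha V = ((max_weight_class V)%:R / (card_vs V)%:R)%R.
Proof. by []. Qed.

Lemma card_vs_gt0 (m : nat) (V : {vspace F2vec m}) : (0 < card_vs V)%N.
Proof. by apply/card_gt0P; exists 0%R; rewrite inE mem0v. Qed.

Lemma wt_le (m : nat) (x : F2vec m) : (wt x <= m)%N.
Proof. by rewrite /wt -[leqRHS]card_ord max_card. Qed.

Lemma card_Acoset_le_max (m : nat) (V : {vspace F2vec m}) (x : F2vec m) (i : nat) :
  (#|Acoset V x i| <= max_weight_class V)%N.
Proof.
have [i_le_m | m_lt_i] := leqP i m.
  apply: leq_trans (leq_bigmax (Ordinal (i_le_m : i < m.+1)%N))%N.
  exact: (leq_bigmax x).
suff -> : Acoset V x i = set0 by rewrite cards0.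
apply/setP => y; rewrite !inE; apply/negbTE/nandP; right.
by apply: contraTneq m_lt_i => <-; rewrite -leqNgt wt_le.
Qed.

Lemma max_weight_class_mulr_leq (m : nat) (V : {vspace F2vec m}) (c b : nat) :
  (forall i x, #|Acoset V x i| * c <= b)%N -> (max_weight_class V * c <= b)%N.
Proof.
move=> bound; rewrite /max_weight_class.
rewrite (big_morph (muln^~ c) (fun a b => maxnMl a b c) (mul0n c)).
apply/bigmax_leqP => i _.
rewrite (big_morph (muln^~ c) (fun a b => maxnMl a b c) (mul0n c)).
by apply/bigmax_leqP => x _.
Qed.

Section Subspace.
Variables (m : nat) (U V : {vspace F2vec m}).
Hypothesis sUV : (U <= V)%VS.

Lemma card_shifts_into_subspace (w : F2vec m) : w \in V ->
  #|[set z : F2vec m | (z \in V) && ((w - z)%R \in U)]| = card_vs U.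
Proof.
move=> wV; have sub_inj : injective (fun u : F2vec m => (w - u)%R).
  by move=> a b /addrI /oppr_inj.
rewrite /card_vs -(card_imset [set u | u \in U] sub_inj); apply: eq_card => z.
rewrite !inE; apply/andP/imsetP => [[_ wzU] | [u]].
  by exists (w - z)%R; rewrite ?inE // opprB addrC subrK.
rewrite inE => uU ->; rewrite opprB addrCA subrr addr0.
by split; rewrite // rpredB // (subvP sUV).
Qed.

Lemma card_Acoset_mul_le (x : F2vec m) (i : nat) :
  (#|Acoset V x i| * card_vs U <=
   \sum_(z in V) #|Acoset U (x + z)%R i|)%N.
Proof.
rewrite -sum_nat_const.
under eq_bigr => y.
  rewrite inE => /andP[yxV _].
  rewrite -(card_shifts_into_subspace yxV) -sum1dep_card big_mkcondr /=.
  over.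
rewrite exchange_big /=; apply: leq_sum => z _.
rewrite -big_mkcondr sum1dep_card; apply: subset_leq_card.
apply/subsetP => y; rewrite !inE => /andP[/andP[_ ->] yxzU].
by rewrite andbT opprD addrA.
Qed.

Lemma max_weight_class_mul_le :
  (max_weight_class V * card_vs U <= max_weight_class U * card_vs V)%N.
Proof.
apply: max_weight_class_mulr_leq => i x.
apply: leq_trans (card_Acoset_mul_le x i) _.
rewrite mulnC /card_vs cardsE -sum_nat_const; apply: leq_sum => z _.
exact: card_Acoset_le_max.
Qed.

Lemma alpha_antitone : (alpha V <= alpha U)%R.
Proof.
rewrite !alphaE ler_pdivrMr ?ltr0n ?card_vs_gt0 // mulrAC.
rewrite ler_pdivlMr ?ltr0n ?card_vs_gt0 // -!natrM ler_nat.
exact: max_weight_class_mul_le.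
Qed.

End Subspace.

Theorem proposition2 (ms : nat -> nat) (hpos : forall n, (0 < ms n)%N)
  (V U : forall n, {vspace F2vec (ms n)})
  (hUV : forall n, (U n <= V n)%VS)
  (hU : uniform_weight_spectrum U) :
  uniform_weight_spectrum V.
Proof.
move=> eps eps_gt0; have [N alphaU_lt] := hU eps eps_gt0.
exists N => n le_Nn.
exact: le_lt_trans (alpha_antitone (hUV n)) (alphaU_lt n le_Nn).
Qed.
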